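(* Let $A\in\mathbb{R}^{n\times n}$ have rank one. Then $A$ is a Karamardian matrix if and only if $(A^{\dagger})^T$ is a Karamardian matrix. Moreover, if $A$ is Karamardian then both $A^T$ and $A^{\dagger}$ are row monotone.
   Context: $A^{\dagger}$ denotes the Moore–Penrose inverse of $A$. A square matrix $M$ is row monotone if $Mx\ge 0$ and $x\in R(M^T)$ imply $x\ge 0$. For $A\in\mathbb{R}^{n\times n}$ let $K_A=\mathbb{R}^n_+\cap R(A)$ and $K_A^*=\{y\in\mathbb{R}^n: x^Ty\ge 0 \text{ for all } x\in K_A\}$ (one has $K_A^*=\mathbb{R}^n_++N(A^T)$, and its interior is $\{a+b: a>0,\ b\in N(A^T)\}$). For $q\in\mathbb{R}^n$, LCP$(A,K_A,q)$ is to find $x$ with $x\in K_A$, $Ax+q\in K_A^*$, $x^T(Ax+q)=0$. $A$ is a Karamardian matrix if $K_A\ne\{0\}$ and there exists $d$ in the interior of $K_A^*$ such that both LCP$(A,K_A,0)$ and LCP$(A,K_A,d)$ have $x=0$ as their only solution. *)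

From HB Require Import structures.
From mathcomp Require Import all_boot all_order all_algebra.
From mathcomp Require Import reals.
Set Implicit Arguments. Unset Strict Implicit. Unset Printing Implicit Defensive.
Import Order.TTheory GRing.Theory Num.Theory.
Local Open Scope ring_scope.

Section Defs.
Variables (R : realType) (n : nat).

Definition nonneg (x : 'cV[R]_n) : Prop := forall i, 0 <= x i 0.
Definition pos (x : 'cV[R]_n) : Prop := forall i, 0 < x i 0.

Definition in_range (M : 'M[R]_n) (x : 'cV[R]_n) : Prop := exists y, x = M *m y.
Definition in_null (M : 'M[R]_n) (x : 'cV[R]_n) : Prop := M *m x = 0.

Definition is_MP_inverse (A X : 'M[R]_n) : Prop :=
  [/\ A *m X *m A = A, X *m A *m X = X,
      (A *m X)^T = A *m X & (X *m A)^T = X *m A].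

Definition row_monotone (M : 'M[R]_n) : Prop :=
  forall x : 'cV[R]_n, nonneg (M *m x) -> in_range M^T x -> nonneg x.

Definition dotv (x y : 'cV[R]_n) : R := (x^T *m y) 0 0.

Definition K (A : 'M[R]_n) (x : 'cV[R]_n) : Prop := nonneg x /\ in_range A x.

Definition Kdual (A : 'M[R]_n) (y : 'cV[R]_n) : Prop :=
  forall x, K A x -> 0 <= dotv x y.

(* topological interior of K_A^* (w.r.t. the sup norm on R^n) *)
Definition int_Kdual (A : 'M[R]_n) (y : 'cV[R]_n) : Prop :=
  exists2 e : R, 0 < e &
    forall z : 'cV[R]_n, (forall i, `|z i 0 - y i 0| < e) -> Kdual A z.

Definition LCP_sol (A : 'M[R]_n) (q x : 'cV[R]_n) : Prop :=
  [/\ K A x, Kdual A (A *m x + q) & dotv x (A *m x + q) = 0].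

Definition Karamardian (A : 'M[R]_n) : Prop :=
  (exists2 x, K A x & x != 0) /\
  exists2 d, int_Kdual A d &
    (forall x, LCP_sol A 0 x -> x = 0) /\ (forall x, LCP_sol A d x -> x = 0).

End Defs.

From HB Require Import structures.
From mathcomp Require Import all_boot all_order all_algebra.
From mathcomp Require Import reals.
From mathcomp Require Import ring lra.
Set Implicit Arguments. Unset Strict Implicit. Unset Printing Implicit Defensive.
Import Order.TTheory GRing.Theory Num.Theory.
Local Open Scope ring_scope.

(* A rank-one matrix factors as an outer product A = u v^T with u, v <> 0,
   and its Moore--Penrose inverse is then (|u|^2 |v|^2)^-1 v u^T, i.e. a
   positive multiple k A^T of the transpose (the Moore--Penrose inverse is
   unique).  Hence (A^dag)^T = k A, and the first claim reduces to the fact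
   that the cone K_A, its dual, its interior and the solution sets of the
   complementarity problems are all invariant under positive scaling of A.
   For the second claim, row monotonicity is also invariant under positive
   scaling, so it suffices to show that A^T is row monotone.  Since R(A) is a
   line, K_A is the ray spanned by some nonzero w >= 0; a vector d of the
   interior of K_A^* satisfies <w, d> > 0, and uniqueness of the solutions of
   LCP(A, K_A, 0) and LCP(A, K_A, d) forces <w, A w> > 0.  If A^T x >= 0 with
   x = l w in R(A), then 0 <= <w, A^T x> = l <w, A w>, so l >= 0 and x >= 0. *)

Section InnerProduct.
Variables (R : realType) (n : nat).
Implicit Types (M : 'M[R]_n) (x y z : 'cV[R]_n).

Lemma dotvZl x y k : dotv (k *: x) y = k * dotv x y.
Proof. by rewrite /dotv linearZ /= -scalemxAl mxE. Qed.

Lemma dotvZr x y k : dotv x (k *: y) = k * dotv x y.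
Proof. by rewrite /dotv -scalemxAr mxE. Qed.

Lemma dotvDr x y z : dotv x (y + z) = dotv x y + dotv x z.
Proof. by rewrite /dotv mulmxDr mxE. Qed.

Lemma dotvC x y : dotv x y = dotv y x.
Proof. by rewrite /dotv -[x^T *m y]trmxK trmx_mul trmxK mxE. Qed.

Lemma dotv_trmx M x y : dotv x (M^T *m y) = dotv (M *m x) y.
Proof. by rewrite /dotv trmx_mul mulmxA. Qed.

Lemma dotv_gt0 x y i :
  (forall j, 0 <= x j 0 * y j 0) -> 0 < x i 0 * y i 0 -> 0 < dotv x y.
Proof.
move=> ge0 gt0; rewrite /dotv mxE (bigD1 i) //= mxE.
apply: (lt_le_trans gt0); rewrite lerDl sumr_ge0 // => j _.
by rewrite mxE.
Qed.

Lemma dotv_ge0 x y : nonneg x -> nonneg y -> 0 <= dotv x y.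
Proof.
move=> x0 y0; rewrite /dotv mxE sumr_ge0 // => j _.
by rewrite mxE mulr_ge0.
Qed.

Lemma nonzero_entry x : x != 0 -> exists i, x i 0 != 0.
Proof. by case/matrix0Pn=> i [j]; rewrite (ord1 j); exists i. Qed.

Lemma dotv_self_gt0 x : x != 0 -> 0 < dotv x x.
Proof.
case/nonzero_entry=> i xi; apply: (dotv_gt0 (i := i)) => [j|].
  by rewrite -expr2 sqr_ge0.
by rewrite -expr2 exprn_even_gt0.
Qed.

Lemma dotv_ones_gt0 x : nonneg x -> x != 0 -> 0 < dotv x (const_mx 1).
Proof.
move=> x0 /nonzero_entry [i xi]; apply: (dotv_gt0 (i := i)) => [j|].
  by rewrite mxE mulr1.
by rewrite mxE mulr1 lt_def xi x0.
Qed.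

End InnerProduct.

Section Scaling.
Variables (R : realType) (n : nat).
Implicit Types (M : 'M[R]_n) (x y q : 'cV[R]_n).

Lemma in_range_scale M k x : k != 0 -> in_range (k *: M) x <-> in_range M x.
Proof.
move=> k0; split=> [[y ->]|[y ->]].
  by exists (k *: y); rewrite -scalemxAl scalemxAr.
by exists (k^-1 *: y); rewrite -scalemxAl -scalemxAr scalerA mulfV ?scale1r.
Qed.

Lemma K_scale M k x : k != 0 -> K (k *: M) x <-> K M x.
Proof. by move=> k0; rewrite /K in_range_scale. Qed.

Lemma Kdual_scale M k y : k != 0 -> Kdual (k *: M) y <-> Kdual M y.
Proof. by move=> k0; split=> H x Kx; apply: H; move: Kx; rewrite K_scale. Qed.

Lemma Kdual_cone M k y : 0 < k -> Kdual M (k *: y) <-> Kdual M y.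
Proof. by move=> kp; split=> H x /H; rewrite dotvZr pmulr_rge0. Qed.

Lemma int_Kdual_scale M k y : k != 0 -> int_Kdual (k *: M) y <-> int_Kdual M y.
Proof.
by move=> k0; split=> -[e ep H]; exists e => // z /H; rewrite Kdual_scale.
Qed.

(* The interior of K_A^* is a cone: the ball of radius e around d is mapped
   to the ball of radius k e around k d. *)
Lemma int_Kdual_cone M k d : 0 < k -> int_Kdual M d -> int_Kdual M (k *: d).
Proof.
move=> kp [e ep H]; exists (k * e) => [|z hz]; first by rewrite mulr_gt0.
rewrite -(Kdual_cone _ (k := k^-1)) ?invr_gt0 //; apply: H => i.
have := hz i; rewrite !mxE => h.
have -> : k^-1 * z i 0 - d i 0 = k^-1 * (z i 0 - k * d i 0).
  by field; rewrite gt_eqF.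
by rewrite normrM gtr0_norm ?invr_gt0 // ltr_pdivrMl.
Qed.

Lemma LCP_scale M k q x : 0 < k -> LCP_sol (k *: M) (k *: q) x <-> LCP_sol M q x.
Proof.
move=> kp; rewrite /LCP_sol; have k0 : k != 0 by rewrite gt_eqF.
have -> : (k *: M) *m x + k *: q = k *: (M *m x + q).
  by rewrite scalerDr scalemxAl.
rewrite dotvZr; split=> [[h1 h2 h3]|[h1 h2 h3]]; split.
- by move: h1; rewrite K_scale.
- by move: h2; rewrite Kdual_scale // Kdual_cone.
- by move/eqP: h3; rewrite mulf_eq0 (negbTE k0) => /eqP.
- by rewrite K_scale.
- by rewrite Kdual_scale // Kdual_cone.
- by rewrite h3 mulr0.
Qed.

Lemma Karamardian_scale M k : 0 < k -> Karamardian M -> Karamardian (k *: M).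
Proof.
move=> kp [[x Kx nx] [d di [H0 Hd]]]; have k0 : k != 0 by rewrite gt_eqF.
split; first by exists x; rewrite ?K_scale.
exists (k *: d); first by rewrite int_Kdual_scale //; apply: int_Kdual_cone.
split=> y; last by rewrite LCP_scale //; apply: Hd.
by have := @LCP_scale M k 0 y kp; rewrite scaler0 => ->; apply: H0.
Qed.

Lemma Karamardian_scale_iff M k : 0 < k -> Karamardian M <-> Karamardian (k *: M).
Proof.
move=> kp; split; first exact: Karamardian_scale.
move=> /(@Karamardian_scale _ k^-1); rewrite invr_gt0 scalerA mulVf ?scale1r //.
  by apply.
by rewrite gt_eqF.
Qed.

Lemma row_monotone_scale M k : 0 < k -> row_monotone M -> row_monotone (k *: M).
Proof.
move=> kp H x hx; rewrite linearZ /= in_range_scale ?gt_eqF //; apply: H => i.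
by have := hx i; rewrite -scalemxAl mxE pmulr_rge0.
Qed.

End Scaling.

Section MoorePenrose.
Variables (R : realType) (n : nat).
Implicit Types (A X Y : 'M[R]_n) (u v w x y z : 'cV[R]_n).

Lemma MP_unique A X Y : is_MP_inverse A X -> is_MP_inverse A Y -> X = Y.
Proof.
move=> [AXA XAX SAX SXA] [AYA YAY SAY SYA].
have eT : A^T = A^T *m Y^T *m A^T by rewrite -{1}AYA !trmx_mul mulmxA.
have eT' : A^T = A^T *m X^T *m A^T by rewrite -{1}AXA !trmx_mul mulmxA.
have hX : X = X *m A *m Y.
  have e1 : X = X *m (X^T *m A^T) by rewrite -trmx_mul SAX mulmxA XAX.
  have e2 : X^T *m (A^T *m Y^T *m A^T) = (A *m X) *m (A *m Y).
    by rewrite -SAX -SAY -!trmx_mul !mulmxA.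
  by rewrite {1}e1 {1}eT e2 !mulmxA XAX.
have hY : Y = X *m A *m Y.
  have e1 : Y = A^T *m Y^T *m Y by rewrite -trmx_mul SYA YAY.
  have e2 : A^T *m X^T *m A^T *m Y^T = (X *m A) *m (Y *m A).
    by rewrite -SXA -SYA -!trmx_mul !mulmxA.
  by rewrite {1}e1 {1}eT' e2 -mulmxA YAY.
by rewrite hY -hX.
Qed.

Lemma mul_outer x y z w : x *m y^T *m (z *m w^T) = dotv y z *: (x *m w^T).
Proof.
by rewrite mulmxA -(mulmxA x) [y^T *m z]mx11_scalar mul_mx_scalar scalemxAl.
Qed.

Lemma MP_outer u v : u != 0 -> v != 0 ->
  is_MP_inverse (u *m v^T) ((dotv v v * dotv u u)^-1 *: (u *m v^T)^T).
Proof.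
move=> /dotv_self_gt0 /gt_eqF b0 /dotv_self_gt0 /gt_eqF a0.
rewrite trmx_mul trmxK.
have AX : u *m v^T *m ((dotv v v * dotv u u)^-1 *: (v *m u^T))
          = (dotv u u)^-1 *: (u *m u^T).
  by rewrite -scalemxAr mul_outer scalerA; congr (_ *: _); field; rewrite a0 b0.
have XA : ((dotv v v * dotv u u)^-1 *: (v *m u^T)) *m (u *m v^T)
          = (dotv v v)^-1 *: (v *m v^T).
  by rewrite -scalemxAl mul_outer scalerA; congr (_ *: _); field; rewrite a0 b0.
split.
- by rewrite AX -scalemxAl mul_outer scalerA mulVf ?scale1r ?b0.
- rewrite XA -scalemxAl -scalemxAr mul_outer !scalerA; congr (_ *: _).
  by field; rewrite a0 b0.
- by rewrite AX linearZ /= trmx_mul trmxK.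
- by rewrite XA linearZ /= trmx_mul trmxK.
Qed.

End MoorePenrose.

Lemma rank1_outer (R : realType) n (A : 'M[R]_n) :
  \rank A = 1%N -> exists u v : 'cV[R]_n, [/\ u != 0, v != 0 & A = u *m v^T].
Proof.
move=> rA; have [u [v hA]] : exists u v : 'cV[R]_n, A = u *m v^T.
  rewrite -(mulmx_base A); move: (col_base A) (row_base A); rewrite rA => C D.
  by exists C, D^T; rewrite trmxK.
exists u, v; split=> //; apply/eqP=> uv0; move: rA.
  by rewrite hA uv0 mul0mx mxrank0.
by rewrite hA uv0 trmx0 mulmx0 mxrank0.
Qed.

Lemma rank1_MP_inverse (R : realType) n (A X : 'M[R]_n) :
  \rank A = 1%N -> is_MP_inverse A X -> exists2 k : R, 0 < k & X = k *: A^T.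
Proof.
move=> /rank1_outer [u [v [u0 v0 ->]]] MP.
exists (dotv v v * dotv u u)^-1.
  by rewrite invr_gt0 mulr_gt0 ?dotv_self_gt0.
exact: MP_unique MP (MP_outer u0 v0).
Qed.

(* A vector w of K_A pairs positively with every interior point of K_A^*:
   shifting d by -e/2 along the all-ones vector stays in K_A^*. *)
Lemma int_Kdual_gt0 (R : realType) n (A : 'M[R]_n) (d w : 'cV[R]_n) :
  int_Kdual A d -> K A w -> w != 0 -> 0 < dotv w d.
Proof.
move=> [e ep He] Kw w0.
have near_d j : `|(d - (e / 2) *: const_mx 1) j 0 - d j 0| < e.
  by rewrite !mxE mulr1 addrC addKr normrN gtr0_norm ?divr_gt0 //; lra.
have := He _ near_d w Kw; rewrite dotvDr -scaleNr dotvZr.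
have : 0 < e / 2 * dotv w (const_mx 1).
  by rewrite mulr_gt0 ?divr_gt0 ?dotv_ones_gt0 //; case: Kw.
lra.
Qed.

Section RankOneCone.
Variables (R : realType) (n : nat) (A : 'M[R]_n) (u v w : 'cV[R]_n).
Hypothesis outerA : A = u *m v^T.
Hypotheses (Kw : K A w) (w0 : w != 0).

Lemma range_line z : in_range A z -> exists l, z = l *: w.
Proof.
have Ay y : A *m y = dotv v y *: u.
  by rewrite outerA -mulmxA [v^T *m y]mx11_scalar mul_mx_scalar.
case: Kw => _ [y0 wA] [y ->].
have s0 : dotv v y0 != 0.
  by apply: contraNneq w0 => s0; rewrite wA Ay s0 scale0r.
by exists (dotv v y / dotv v y0); rewrite wA !Ay scalerA divfK.
Qed.

Lemma K_ray z : K A z -> exists2 l, 0 <= l & z = l *: w.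
Proof.
case: Kw => wnn _ [znn /range_line [l zl]]; exists l => //.
have [i wi] := nonzero_entry w0.
by have := znn i; rewrite zl mxE pmulr_lge0 // lt_def wi wnn.
Qed.

Lemma Kdual_ray y : 0 <= dotv w y -> Kdual A y.
Proof. by move=> h z /K_ray [l l0 ->]; rewrite dotvZl mulr_ge0. Qed.

Lemma LCP_ray q t :
  0 <= t -> t * dotv w (A *m w) + dotv w q = 0 -> LCP_sol A q (t *: w).
Proof.
case: Kw => wnn [y0 wA] t0 eq0.
have orth : dotv w (A *m (t *: w) + q) = 0 by rewrite dotvDr -scalemxAr dotvZr.
split; last by rewrite dotvZl orth mulr0.
- split=> [j|]; first by rewrite mxE mulr_ge0.
  by exists (t *: y0); rewrite -scalemxAr wA.
- by apply: Kdual_ray; rewrite orth.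
Qed.

Lemma LCP_unique_dotv_gt0 d :
  (forall x, LCP_sol A 0 x -> x = 0) -> (forall x, LCP_sol A d x -> x = 0) ->
  0 < dotv w d -> 0 < dotv w (A *m w).
Proof.
move=> H0 Hd wd; set a := dotv w (A *m w).
(* A positive multiple of w would be a nonzero solution of LCP(A, K_A, q). *)
have nonsol q t : 0 < t -> t * a + dotv w q = 0 ->
  ~ (forall x, LCP_sol A q x -> x = 0).
  move=> tp eq0 /(_ _ (LCP_ray (ltW tp) eq0)) /eqP.
  by rewrite scaler_eq0 gt_eqF // (negbTE w0).
case: (ltgtP a 0) => [neg|//|zer].
  have tp : 0 < dotv w d / - a by rewrite divr_gt0 // oppr_gt0.
  by case: (nonsol d _ tp) => //; field; rewrite lt_eqF.
by case: (nonsol 0 1 ltr01) => //; rewrite zer /dotv mulmx0 mxE mulr0 addr0.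
Qed.

Lemma row_monotone_trmx : 0 < dotv w (A *m w) -> row_monotone A^T.
Proof.
move=> wAw x hx; rewrite trmxK => /range_line [l xl].
have := dotv_ge0 (proj1 Kw) hx.
rewrite dotv_trmx xl dotvZr dotvC pmulr_lge0 // => l0 j.
by rewrite mxE mulr_ge0 //; case: Kw.
Qed.

End RankOneCone.

Lemma rank1_Karamardian_row_monotone (R : realType) n (A : 'M[R]_n) :
  \rank A = 1%N -> Karamardian A -> row_monotone A^T.
Proof.
move=> /rank1_outer [u [v [_ _ outerA]]] [[w Kw w0] [d dint [H0 Hd]]].
apply: (row_monotone_trmx outerA Kw w0).
exact: LCP_unique_dotv_gt0 outerA Kw w0 _ H0 Hd (int_Kdual_gt0 dint Kw w0).
Qed.

Theorem mainTheorem8 (R : realType) (n : nat) (A Adag : 'M[R]_n) :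
  \rank A = 1%N -> is_MP_inverse A Adag ->
  (Karamardian A <-> Karamardian Adag^T) /\
  (Karamardian A -> row_monotone A^T /\ row_monotone Adag).
Proof.
move=> rA MP; have [k kp ->] := rank1_MP_inverse rA MP.
rewrite linearZ /= trmxK; split; first exact: Karamardian_scale_iff.
move=> KA; have AT_mono := rank1_Karamardian_row_monotone rA KA.
by split=> //; apply: row_monotone_scale.
Qed.
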